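(* Let $A\in \mathrm{GL}(m,\mathbb{Z})$, and suppose that there exist a sequence of integers $r_i\to\infty$ and matrices $B_i\in\mathrm{GL}(m,\mathbb{Z})$ satisfying $B_i^{r_i}=A$. Then there exists a nonzero integer $e$ such that $A^e=\mathrm{Id}$. *)

From mathcomp Require Import all_boot all_order all_algebra.
Set Implicit Arguments. Unset Strict Implicit. Unset Printing Implicit Defensive.
Import GRing.Theory Num.Theory.
Local Open Scope ring_scope.

(* Natural power of an m x m matrix (works for every m, including m = 0). *)
Definition mxpown (m : nat) (B : 'M[int]_m) (n : nat) : 'M[int]_m :=
  iter n (mulmx B) 1%:M.

(* Integer power: for negative exponents use the matrix inverse
   (only meaningful for B \in unitmx, i.e. B in GL(m,Z)). *)
Definition mxpowz (m : nat) (B : 'M[int]_m) (z : int) : 'M[int]_m :=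
  match z with
  | Posz n => mxpown B n
  | Negz n => mxpown (invmx B) n.+1
  end.

Definition GLZ (m : nat) (A : 'M[int]_m) : Prop := A \in unitmx.

From mathcomp Require Import all_boot all_order all_algebra algC zify.
From Stdlib Require Import Classical.
Set Implicit Arguments. Unset Strict Implicit. Unset Printing Implicit Defensive.
Import Order.TTheory GRing.Theory Num.Theory.
Local Open Scope ring_scope.

(* Over the algebraic numbers every eigenvalue of B_i is an r_i-th root of an
   eigenvalue of A, so the eigenvalues of the B_i are bounded independently of
   i, the characteristic polynomials of the B_i have bounded integer
   coefficients, and one of them, P, recurs for infinitely many i.  For a root
   mu of P the powers mu^(r_i) range over the finitely many eigenvalues of A, so
   mu^(r_i) = mu^(r_j) with r_i < r_j: the roots of P are roots of unity.  For a
   common order M, the matrices B_i^M are unipotent and (B_i^M)^(r_i) = A^M.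
   Finally, a unipotent integer matrix U <> 1 has no unipotent s-th roots for
   large s: if V^s = U with V = 1 + N, then (U - 1)^u = s^u N^u where u is the
   nilpotency index of N, which is also that of U - 1; so a fixed nonzero entry
   of (U - 1)^u would be divisible by arbitrarily large s. *)

Definition infinitely_often (P : nat -> Prop) := forall k, exists2 i, (k <= i)%N & P i.

Lemma infinitely_often_sub (P Q : nat -> Prop) :
  (forall i, P i -> Q i) -> infinitely_often P -> infinitely_often Q.
Proof. by move=> PQ ioP k; have [i ki /PQ] := ioP k; exists i. Qed.

Lemma infinitely_often_mem (T : eqType) (s : seq T) (f : nat -> T) (P : nat -> Prop) :
  infinitely_often P -> (forall i, P i -> f i \in s) ->
  exists t, infinitely_often (fun i => P i /\ f i = t).
Proof.
elim: s P => [|a s IH] P ioP fs; first by have [i _ /fs] := ioP 0%N.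
have [ioa | nioa] := classic (infinitely_often (fun i => P i /\ f i = a)).
  by exists a.
have [k0 fa] : exists k0, forall i, (k0 <= i)%N -> P i -> f i != a.
  have [k0 Hk0] := not_all_ex_not _ _ nioa; exists k0 => i k0i Pi.
  by apply/eqP => fia; apply: Hk0; exists i.
have [|i [Pi k0i]|t iot] := IH (fun i => P i /\ (k0 <= i)%N).
- move=> k; have [i] := ioP (maxn k k0).
  by rewrite geq_max => /andP[ki k0i] Pi; exists i.
- by have := fs i Pi; rewrite inE (negbTE (fa i k0i Pi)).
- by exists t; apply: infinitely_often_sub iot => i [[]].
Qed.

Lemma infinitely_often_bounded_int (K : nat) (f : nat -> int) (P : nat -> Prop) :
  infinitely_often P -> (forall i, P i -> `|f i| <= K%:Z) ->
  exists t, infinitely_often (fun i => P i /\ f i = t).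
Proof.
move=> ioP fK; apply: (@infinitely_often_mem _ [seq k%:Z - K%:Z | k <- iota 0 K.*2.+1]) => // i /fK fiK.
by apply/mapP; exists (absz (f i + K%:Z)); rewrite ?mem_iota; lia.
Qed.

Lemma infinitely_often_bounded_poly (d K : nat) (p : nat -> {poly int}) (P : nat -> Prop) :
  infinitely_often P -> (forall i, P i -> size (p i) <= d)%N ->
  (forall i k, P i -> `|(p i)`_k| <= K%:Z) ->
  exists q, infinitely_often (fun i => P i /\ p i = q).
Proof.
move=> ioP pd pK.
have coefs e : exists c : nat -> int,
    infinitely_often (fun i => P i /\ forall k, (k < e)%N -> (p i)`_k = c k).
  elim: e => [|e [c ioc]]; first by exists (fun=> 0); apply: infinitely_often_sub ioP.
  have [|t iot] := @infinitely_often_bounded_int K (fun i => (p i)`_e) _ ioc.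
    by move=> i [Pi _]; apply: pK.
  exists (fun k => if k == e then t else c k).
  apply: infinitely_often_sub iot => i [[Pi pc] pt]; split=> // k.
  by rewrite ltnS leq_eqVlt => /orP[/eqP-> | ke]; rewrite ?eqxx // ltn_eqF ?pc.
have [c ioc] := coefs d; have [i1 _ [Pi1 pc1]] := ioc 0%N.
exists (p i1); apply: infinitely_often_sub ioc => i [Pi pc]; split=> //.
apply/polyP => k; have [kd | dk] := ltnP k d; first by rewrite pc ?pc1.
by rewrite !nth_default ?(leq_trans (pd _ Pi1) dk) ?(leq_trans (pd _ Pi) dk).
Qed.
Lemma bounded_seq (R : numDomainType) (S : seq R) :
  exists2 L : R, 1 <= L & {in S, forall z, `|z| <= L}.
Proof.
elim: S => [|a S [L L1 SL]]; first by exists 1.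
exists (L + `|a|); first by rewrite -[1]addr0 lerD.
move=> z; rewrite inE => /orP[/eqP-> | zS]; first by rewrite lerDr (le_trans ler01 L1).
by rewrite (le_trans (SL z zS)) // lerDl.
Qed.

Lemma norm_root_le (R : numDomainType) (x L : R) (s : nat) : (0 < s)%N -> 1 <= L ->
  `|x ^+ s| <= L -> `|x| <= L.
Proof.
move=> s0 L1; rewrite normrX => xsL.
have /orP[x1 | x1] := ger_leVge (normr_ge0 x) ler01; first exact: le_trans x1 L1.
exact: le_trans (ler_eXnr s0 x1) xsL.
Qed.

Lemma coef_prod_XsubC_bound (R : numDomainType) (c : R) (S : seq R) : 0 <= c ->
  {in S, forall z, `|z| <= c} ->
  forall k, `|(\prod_(z <- S) ('X - z%:P))`_k| <= (1 + c) ^+ size S.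
Proof.
move=> c0; elim: S => [|a S IH] Sc k.
  by rewrite big_nil coefC expr0; case: (k == 0%N); rewrite ?normr1 ?normr0 ?ler01.
rewrite big_cons mulrBl coefB coefXM coefCM /= exprS mulrDl mul1r.
have {}IH := IH (fun z zS => Sc z (mem_behead (s := a :: S) zS)).
apply: le_trans (ler_normB _ _) (lerD _ _).
  by case: (k == 0%N); rewrite ?normr0 ?exprn_ge0 ?addr_ge0 ?IH.
by rewrite normrM ler_pM // Sc ?mem_head.
Qed.

Lemma char_poly_split (F : closedFieldType) (n : nat) (C : 'M[F]_n) :
  exists2 S : seq F, char_poly C = \prod_(z <- S) ('X - z%:P) & size S = n.
Proof.
have [S eS] := closed_field_poly_normal (char_poly C).
rewrite (monicP (char_poly_monic C)) scale1r in eS; exists S => //.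
by have := size_char_poly C; rewrite eS size_prod_XsubC => -[].
Qed.

Lemma eigenvalueX (F : fieldType) (n : nat) (C : 'M[F]_n.+1) (mu : F) (s : nat) :
  eigenvalue C mu -> eigenvalue (C ^+ s) (mu ^+ s).
Proof.
move=> /eigenvalueP[v vC v0]; apply/eigenvalueP; exists v => //.
elim: s => [|s IH]; first by rewrite expr0 scale1r -idmxE mulmx1.
by rewrite exprSr -mulmxE mulmxA IH -scalemxAl vC scalerA exprSr.
Qed.

Lemma eigenvalue_unitmx_neq0 (F : fieldType) (n : nat) (C : 'M[F]_n) :
  C \in unitmx -> ~~ eigenvalue C 0.
Proof.
move=> Cu; apply/eigenvalueP => -[v vC /negP]; apply; apply/eqP.
by rewrite -[v]mulmx1 -(mulmxV Cu) mulmxA vC scale0r mul0mx.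
Qed.

Lemma common_exponent (R : pzSemiRingType) (S : seq R) :
  {in S, forall x, exists2 d, (0 < d)%N & x ^+ d = 1} ->
  exists2 M, (0 < M)%N & {in S, forall x, x ^+ M = 1}.
Proof.
elim: S => [|a S IH] Sd; first by exists 1%N.
have [M M0 SM] := IH (fun x xS => Sd x (mem_behead (s := a :: S) xS)).
have [d d0 ad] := Sd a (mem_head _ _).
exists (d * M)%N; first by rewrite muln_gt0 d0.
move=> x; rewrite inE => /orP[/eqP-> | xS]; first by rewrite exprM ad expr1n.
by rewrite mulnC exprM SM // expr1n.
Qed.

Lemma prod_XsubC_dvdp_unity (F : fieldType) (S : seq F) (M : nat) :
  {in S, forall x, x ^+ M = 1} ->
  \prod_(z <- S) ('X - z%:P) %| ('X ^+ M - 1) ^+ size S.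
Proof.
elim: S => [|a S IH] SM; first by rewrite big_nil dvdpp.
rewrite big_cons exprS dvdp_mul ?IH //.
  by rewrite dvdp_XsubCl rootE !hornerE SM ?mem_head ?subrr.
by move=> x xS; rewrite SM // (mem_behead (s := a :: S)).
Qed.

Lemma unipotent_of_char_poly_unity (F : closedFieldType) (n : nat) (C : 'M[F]_n.+1) (M : nat) :
  (forall mu, root (char_poly C) mu -> mu ^+ M = 1) -> (C ^+ M - 1) ^+ n.+1 = 0.
Proof.
move=> CM; have [S eS sS] := char_poly_split C.
have /dvdpP[q eq] : char_poly C %| ('X ^+ M - 1) ^+ n.+1.
  by rewrite eS -sS prod_XsubC_dvdp_unity // => mu muS; rewrite CM // eS root_prod_XsubC.
have := congr1 (horner_mx C) eq.
by rewrite rmorphM /= Cayley_Hamilton mulr0 rmorphXn rmorphB rmorph1 rmorphXn /= horner_mx_X.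
Qed.

Lemma nilpotent_index (R : nzRingType) (N : R) (t : nat) : N != 0 -> N ^+ t = 0 ->
  exists u, [/\ (0 < u)%N, N ^+ u != 0 & N ^+ u.+1 = 0].
Proof.
move=> N0; elim: t => [|t IH]; first by move/eqP; rewrite expr0 oner_eq0.
have [/IH // | Nt Nt1] := eqVneq (N ^+ t) 0.
by exists t; split=> //; case: t {IH} Nt Nt1 => // _ /eqP; rewrite expr1 (negbTE N0).
Qed.

Lemma nilpotent_index_le (R : pzRingType) (N : R) (a b : nat) :
  N ^+ a != 0 -> N ^+ b.+1 = 0 -> (a <= b)%N.
Proof.
move=> Na Nb; rewrite leqNgt; apply: contra Na => ba.
by rewrite -(subnKC ba) exprD Nb mul0r.
Qed.

(* (1 + N)^s - 1 = N * Y with Y = \sum_(k < s) (1 + N)^k, and Y acts on N^u as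
   multiplication by s. *)
Lemma expr_unipotent_sub1 (R : pzRingType) (N : R) (s u : nat) : N ^+ u.+1 = 0 ->
  ((1 + N) ^+ s - 1) ^+ u = N ^+ u *+ s ^ u /\ ((1 + N) ^+ s - 1) ^+ u.+1 = 0.
Proof.
move=> Nu; set Y := \sum_(k < s) (1 + N) ^+ k.
have eX : (1 + N) ^+ s - 1 = N * Y by rewrite subrX1 addrAC subrr add0r.
have cNY : GRing.comm N Y.
  by apply: commr_sum => k _; apply: commrX; apply: commrD; [exact: commr1 | exact: commr_refl].
have NuX k : N ^+ u * (1 + N) ^+ k = N ^+ u.
  elim: k => [|k IH]; first by rewrite mulr1.
  by rewrite exprSr mulrA IH mulrDr mulr1 -exprSr Nu addr0.
have NuY k : N ^+ u * Y ^+ k = N ^+ u *+ s ^ k.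
  elim: k => [|k IH]; first by rewrite mulr1.
  rewrite exprSr mulrA IH mulrnAl mulr_sumr (eq_bigr _ (fun k : 'I_s => fun _ => NuX k)).
  by rewrite sumr_const card_ord -mulrnA expnS.
by rewrite eX !exprMn_comm // NuY Nu mul0r.
Qed.

Lemma int_mulrn_small (v w : int) (k : nat) : v = w *+ k -> `|v| < k%:Z -> v = 0.
Proof.
move=> ->; have [-> | w0] := eqVneq w 0; first by rewrite mul0rn.
by rewrite -mulr_natr natz normrM; nia.
Qed.

Lemma unipotent_roots_unbounded_eq1 (n : nat) (U : 'M[int]_n.+1) :
  (forall k, exists (V : 'M[int]_n.+1) (s : nat),
     [/\ (k <= s)%N, (V - 1) ^+ n.+1 = 0 & V ^+ s = U]) -> U = 1.
Proof.
move=> roots; apply/eqP; rewrite -subr_eq0; apply: contraT => X0; set X := U - 1 in X0.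
have index V s : (0 < s)%N -> (V - 1) ^+ n.+1 = 0 -> V ^+ s = U -> exists u,
    [/\ (0 < u)%N, X ^+ u != 0, X ^+ u.+1 = 0 & X ^+ u = (V - 1) ^+ u *+ s ^ u].
  move=> s0 nilV VU; have eX : X = (1 + (V - 1)) ^+ s - 1 by rewrite [1 + _]addrC subrK VU.
  have N0 : V - 1 != 0 by apply: contra_neq X0; rewrite eX => ->; rewrite addr0 expr1n subrr.
  have [u [u0 Nu Nu1]] := nilpotent_index N0 nilV.
  have [Xu Xu1] := expr_unipotent_sub1 s Nu1.
  exists u; rewrite eX Xu Xu1; split=> //.
  have [a [b Nab]] := matrix0Pn _ Nu.
  apply/matrix0Pn; exists a, b; by rewrite mulmxnE mulrn_eq0 negb_or Nab expn_eq0 andbT eqn0Ngt s0.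
have [V1 [s1 [s1_gt0 nilV1 V1U]]] := roots 1%N.
have [u [_ Xu Xu1 _]] := index V1 s1 s1_gt0 nilV1 V1U.
have [a [b Xab]] := matrix0Pn _ Xu.
have [V2 [s2 [s2_big nilV2 V2U]]] := roots (absz ((X ^+ u) a b)).+1.
have [u2 [u2_gt0 Xu2 Xu21 eXu2]] := index V2 s2 (leq_trans (ltn0Sn _) s2_big) nilV2 V2U.
have u2u : u2 = u by apply/eqP; rewrite eqn_leq !(nilpotent_index_le (N := X)).
subst u2.
suff /eqP : (X ^+ u) a b = 0 by rewrite (negbTE Xab).
apply: (@int_mulrn_small _ (((V2 - 1) ^+ u) a b) (s2 ^ u)); first by rewrite -mulmxnE -eXu2.
have : (s2 <= s2 ^ u)%N by rewrite -{1}(expn1 s2) leq_pexp2l // (leq_trans _ s2_big).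
lia.
Qed.

Lemma map_mx_injective (aT rT : Type) (f : aT -> rT) (m n : nat) :
  injective f -> injective (@map_mx aT rT f m n).
Proof.
move=> f_inj A1 A2 /matrixP eqf; apply/matrixP => i j.
by apply: f_inj; have := eqf i j; rewrite !mxE.
Qed.

Lemma mxpownE (n : nat) (C : 'M[int]_n.+1) (k : nat) : mxpown C k = C ^+ k.
Proof. by elim: k => //= k IH; rewrite /mxpown /= -/(mxpown C k) IH exprS mulmxE. Qed.

Section UnboundedRoots.

Variables (n : nat) (A : 'M[int]_n.+1) (s : nat -> nat) (B : nat -> 'M[int]_n.+1).
Hypotheses (unitA : A \in unitmx) (s_gt0 : forall i, (0 < s i)%N)
  (s_to_oo : forall k, exists i0, forall i, (i0 <= i)%N -> (k <= s i)%N)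
  (B_root : forall i, B i ^+ s i = A).

Local Notation mxC M := (map_mx (intr : int -> algC) M).

Lemma char_poly_root_expr (i : nat) (mu : algC) :
  root (char_poly (mxC (B i))) mu -> root (char_poly (mxC A)) (mu ^+ s i).
Proof. by rewrite -!eigenvalue_root_char -(B_root i) rmorphXn; apply: eigenvalueX. Qed.

Lemma char_poly_coef_bounded : exists K : nat, forall i k, `|(char_poly (B i))`_k| <= K%:Z.
Proof.
have [RA eRA _] := char_poly_split (mxC A); have [L L1 RAL] := bounded_seq RA.
have L0 : 0 <= (1 + L) ^+ n.+1 by rewrite exprn_ge0 // addr_ge0 // (le_trans ler01 L1).
exists (Num.Def.archi_bound ((1 + L) ^+ n.+1)) => i k.
have [S eS sS] := char_poly_split (mxC (B i)).
have SL : {in S, forall z, `|z| <= L}.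
  move=> z zS; apply: (norm_root_le (s_gt0 i) L1); apply: RAL.
  by rewrite -root_prod_XsubC -eRA char_poly_root_expr // eS root_prod_XsubC.
rewrite -(ler_int algC) intr_norm -coef_map /= map_char_poly eS.
have := coef_prod_XsubC_bound (le_trans ler01 L1) SL k; rewrite sS => /le_trans; apply.
exact/ltW/archi_boundP.
Qed.

Lemma recurrent_char_poly_root_unity (P : {poly int}) (mu : algC) :
  infinitely_often (fun i => char_poly (B i) = P) ->
  root (map_poly intr P) mu -> exists2 d, (0 < d)%N & mu ^+ d = 1.
Proof.
move=> ioP Pmu; have [RA eRA _] := char_poly_split (mxC A).
have RA0 : 0 \notin RA.
  rewrite -root_prod_XsubC -eRA -eigenvalue_root_char eigenvalue_unitmx_neq0 //.
  by rewrite unitmxE det_map_mx rmorph_unit -?unitmxE.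
have muRA i : char_poly (B i) = P -> mu ^+ s i \in RA.
  by move=> BP; rewrite -root_prod_XsubC -eRA char_poly_root_expr // -map_char_poly BP.
have [t iot] := infinitely_often_mem ioP muRA.
have [i _ [BPi mui]] := iot 0%N.
have [i0 big] := s_to_oo (s i).+1; have [j /big sij [_ muj]] := iot i0.
have mu0 : mu != 0.
  by apply: contraNneq RA0 => mu0; have := muRA i BPi; rewrite mu0 expr0n gtn_eqF ?s_gt0.
exists (s j - s i)%N; first by rewrite subn_gt0.
apply: (mulfI (expf_neq0 (s i) mu0)).
by rewrite mulr1 -exprD subnKC ?(ltnW sij) // mui muj.
Qed.

Lemma recurrent_char_poly_unipotent (P : {poly int}) :
  infinitely_often (fun i => char_poly (B i) = P) ->
  exists2 M, (0 < M)%N & forall i, char_poly (B i) = P -> (B i ^+ M - 1) ^+ n.+1 = 0.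
Proof.
move=> ioP; have [i1 _ BP1] := ioP 0%N; have [S eS _] := char_poly_split (mxC (B i1)).
have SP mu : root (map_poly intr P) mu = (mu \in S).
  by rewrite -BP1 map_char_poly eS root_prod_XsubC.
have [M M0 SM] : exists2 M, (0 < M)%N & {in S, forall mu : algC, mu ^+ M = 1}.
  by apply: common_exponent => mu muS; apply: recurrent_char_poly_root_unity ioP _; rewrite SP.
exists M => // i BPi; apply: (map_mx_injective (@intr_inj algC)).
rewrite rmorph0 rmorphXn rmorphB rmorph1 rmorphXn; apply: unipotent_of_char_poly_unity => mu.
by rewrite -map_char_poly BPi SP; apply: SM.
Qed.

Lemma unbounded_roots_finite_order : exists2 M, (0 < M)%N & A ^+ M = 1.
Proof.
have [K BK] := char_poly_coef_bounded.
have [|i _||P ioP] := @infinitely_often_bounded_poly n.+2 K (fun i => char_poly (B i)) (fun=> True).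
- by move=> k; exists k.
- by rewrite size_char_poly.
- by move=> i k _; apply: BK.
have {}ioP : infinitely_often (fun i => char_poly (B i) = P).
  by apply: infinitely_often_sub ioP => i [].
have [M M0 BM] := recurrent_char_poly_unipotent ioP.
exists M => //; apply: unipotent_roots_unbounded_eq1 => k.
have [i0 ks] := s_to_oo k; have [i /ks ki BPi] := ioP i0.
by exists (B i ^+ M), (s i); rewrite -exprM mulnC exprM B_root BM.
Qed.

End UnboundedRoots.

Theorem theorem4p1 (m : nat) (A : 'M[int]_m) (hA : GLZ A)
  (r : nat -> int) (B : nat -> 'M[int]_m)
  (hr : forall N : int, exists i0 : nat, forall i : nat, (i0 <= i)%N -> N <= r i)
  (hB : forall i : nat, GLZ (B i))
  (hBr : forall i : nat, mxpowz (B i) (r i) = A) :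
  exists e : int, e != 0 /\ mxpowz A e = 1%:M.
Proof.
(* The B_i need not be assumed invertible: B_i^(r_i) = A already forces it. *)
case: m A hA B hB hBr => [|n] A hA B _ hBr.
  by exists 1; rewrite [LHS]flatmx0 [RHS]flatmx0.
have [i0 r_pos] := hr 1.
pose s i := absz (r (i0 + i)).
have rE i : r (i0 + i) = (s i)%:Z by have := r_pos (i0 + i) (leq_addr _ _); rewrite /s; lia.
have [i|k|i|M M0 AM] := @unbounded_roots_finite_order n A s (fun i => B (i0 + i)) hA.
- by have := r_pos (i0 + i) (leq_addr _ _); rewrite /s; lia.
- have [i1 r_big] := hr k%:Z; exists i1 => i i1i.
  by rewrite -lez_nat -rE r_big // (leq_trans i1i) ?leq_addl.
- by rewrite -mxpownE -(hBr (i0 + i)) rE.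
by exists M%:Z; rewrite /= mxpownE AM eqz_nat -lt0n M0.
Qed.
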